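(* Let $L$ be a finite graded lattice of rank $n$ with an $S_n$ EL-labeling, and let $\mathfrak m$ be a maximal chain of $L$. Then distinct elements of $\mathcal{M}_{\mathfrak m}$ have distinct label permutations, and the set $\{\omega_{\mathfrak m'}:\mathfrak m'\in\mathcal{M}_{\mathfrak m}\}$ is exactly the set of permutations $\omega$ of $[n]$ with $\omega\le_R\omega_{\mathfrak m}$, each occurring for exactly one $\mathfrak m'\in\mathcal{M}_{\mathfrak m}$.
   Context: An $S_n$ EL-labeling of a finite graded poset with $\hat0,\hat1$ is an edge-labeling of covering pairs such that each interval has exactly one maximal chain with weakly increasing labels (bottom to top), lexicographically smallest among its maximal chains, and labels along each maximal chain $\mathfrak m$ form a permutation $\omega_{\mathfrak m}$ of $[n]$. For $i\in[n-1]$, $U_i(\mathfrak m)$ is the unique maximal chain agreeing with $\mathfrak m$ except possibly at rank $i$ whose label permutation has no descent at $i$. $\mathcal{M}_{\mathfrak m}$ is the set of all maximal chains $U_{i_1}U_{i_2}\cdots U_{i_r}(\mathfrak m)$ for all finite sequences $i_1,\dots,i_r$ in $[n-1]$ (including the empty one). For a permutation $v$ of $[n]$, $\mathrm{INV}(v)=\{(v(j),v(i)): i<j,\ v(i)>v(j)\}$; the (right) weak order is $v\le_R w$ iff $\mathrm{INV}(v)\subseteq\mathrm{INV}(w)$ (equivalently $v$ is obtained from $w$ by successively right-multiplying by adjacent transpositions $s_i$ each decreasing the number of inversions by one). *)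

From mathcomp Require Import all_boot all_order.
Set Implicit Arguments. Unset Strict Implicit. Unset Printing Implicit Defensive.
Import Order.TTheory.

Section Defs.
Variables (d : Order.disp_t) (T : finTBLatticeType d).

Definition covers (x y : T) : bool :=
  (x < y)%O && [forall z : T, ~~ ((x < z)%O && (z < y)%O)].

(* s is (the tail of) a maximal chain x = x0 ⋖ x1 ⋖ ... ⋖ y of the interval [x,y] *)
Definition ichain (x y : T) (s : seq T) : bool :=
  path covers x s && (last x s == y).

Definition maxchain (c : seq T) : bool :=
  if c is x :: s then (x == \bot%O) && ichain x \top%O s else false.

Definition graded_rank (n : nat) : Prop :=
  forall s : seq T, ichain \bot%O \top%O s -> size s = n.

Variable lab : T -> T -> nat.

Definition ilabels (x : T) (s : seq T) : seq nat := pairmap lab x s.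

Definition labels (c : seq T) : seq nat :=
  if c is x :: s then ilabels x s else [::].

End Defs.

Fixpoint lex_le (s t : seq nat) : bool :=
  match s, t with
  | [::], _ => true
  | _ :: _, [::] => false
  | a :: s', b :: t' => (a < b) || ((a == b) && lex_le s' t')
  end.

Definition is_perm_n (n : nat) (w : seq nat) : bool := perm_eq w (iota 1 n).

(* (w(j), w(i)) ∈ INV(w), positions 1-indexed as i < j with w(i) > w(j) *)
Definition INV (w : seq nat) (p : nat * nat) : Prop :=
  exists i j, [/\ i < j < size w, nth 0 w j < nth 0 w i & p = (nth 0 w j, nth 0 w i)].

Definition weak_le (v w : seq nat) : Prop := forall p, INV v p -> INV w p.

(* descent of w at position i (1-indexed): w(i) > w(i+1) *)
Definition descent_at (i : nat) (w : seq nat) : bool := nth 0 w i < nth 0 w i.-1.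

Section SnEL.
Variables (d : Order.disp_t) (T : finTBLatticeType d) (n : nat) (lab : T -> T -> nat).

Definition EL_labeling : Prop :=
  forall x y : T, (x <= y)%O ->
    exists s : seq T,
      [/\ ichain x y s, sorted leq (ilabels lab x s),
          (forall s', ichain x y s' -> sorted leq (ilabels lab x s') -> s' = s)
        & (forall s', ichain x y s' -> lex_le (ilabels lab x s) (ilabels lab x s'))].

Definition Sn_EL_labeling : Prop :=
  EL_labeling /\ forall c : seq T, maxchain c -> is_perm_n n (labels lab c).

(* U_i(m): the maximal chain agreeing with m except possibly at rank i whose
   label permutation has no descent at i (chosen by [pick]; it exists and is
   unique under the S_n EL hypothesis). *)
Definition U (i : nat) (c : (n.+1).-tuple T) : (n.+1).-tuple T :=
  odflt c [pick c' : (n.+1).-tuple T |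
             [&& maxchain c',
                 [forall j : 'I_n.+1, (val j != i) ==> (tnth c' j == tnth c j)]
               & ~~ descent_at i (labels lab c')]].

Definition inM (m c : (n.+1).-tuple T) : Prop :=
  exists s : seq nat, all (fun i => 0 < i < n) s /\ c = foldr U m s.

End SnEL.

(* Under an S_n EL-labeling, U_i leaves a maximal chain m unchanged if its labels
   have no descent at i, and otherwise replaces x_i by the increasing chain of the
   rank-2 interval [x_(i-1), x_(i+1)]; since labels are permutations, this acts on
   omega_m as right multiplication by s_i.  Hence every chain of M_m has labels
   below omega_m in the weak order.  Conversely, if v < omega_m then some descent
   i of omega_m carries an inversion that v lacks, and U_i brings the labels
   closer to v; induction on the inversion number reaches v.
   Uniqueness is a diamond-lemma argument: by uniqueness of increasing chains the
   U_i satisfy the commutation and braid relations, so two descending paths from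
   the same chain, both staying above v, can be joined below; induction on the
   inversion number then shows that the labels determine the chain. *)

From Pilot Require Import Defs.
From mathcomp Require Import all_boot all_order.
From mathcomp Require Import zify.
Set Implicit Arguments. Unset Strict Implicit. Unset Printing Implicit Defensive.
Import Order.TTheory.

(* Positions are 0-indexed: [swap_at i w] is [w s_i] in the paper's notation,
   exchanging the entries at positions [i.-1] and [i], as in [descent_at i]. *)
Definition swap_index (i k : nat) : nat :=
  if k == i.-1 then i else if k == i then i.-1 else k.

Definition swap_at (i : nat) (w : seq nat) : seq nat :=
  mkseq (fun k => nth 0 w (swap_index i k)) (size w).

Section Words.
Implicit Types (v w : seq nat) (i k : nat).

Lemma swap_index_l i : 0 < i -> swap_index i i.-1 = i.
Proof. by rewrite /swap_index eqxx. Qed.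

Lemma swap_index_r i : swap_index i i = i.-1.
Proof. by rewrite /swap_index eqxx; case: eqP. Qed.

Lemma swap_index_id i k : k != i.-1 -> k != i -> swap_index i k = k.
Proof. by rewrite /swap_index => /negbTE -> /negbTE ->. Qed.

Lemma swap_indexK i : 0 < i -> involutive (swap_index i).
Proof.
move=> i_gt0 k; case: (eqVneq k i.-1) => [->|k_l]; first by rewrite swap_index_l // swap_index_r.
case: (eqVneq k i) => [->|k_r]; first by rewrite swap_index_r swap_index_l.
by rewrite !swap_index_id.
Qed.

Lemma swap_index_ltn i k N : 0 < i < N -> (swap_index i k < N) = (k < N).
Proof.
move=> Hi; case: (eqVneq k i.-1) => [->|k_l]; first by rewrite swap_index_l; lia.
case: (eqVneq k i) => [->|k_r]; first by rewrite swap_index_r; lia.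
by rewrite swap_index_id.
Qed.

Lemma swap_index_mono i a b : 0 < i -> a < b -> ~~ ((a == i.-1) && (b == i)) ->
  swap_index i a < swap_index i b.
Proof.
rewrite /swap_index => i_gt0 ab.
by case: (eqVneq a i.-1); case: (eqVneq b i.-1); case: (eqVneq a i); case: (eqVneq b i);
  rewrite ?eqxx /=; lia.
Qed.

Lemma size_swap_at i w : size (swap_at i w) = size w.
Proof. exact: size_mkseq. Qed.

Lemma nth_swap_at i w k : k < size w -> nth 0 (swap_at i w) k = nth 0 w (swap_index i k).
Proof. exact: nth_mkseq. Qed.

Lemma nth_swap_at_id i w k : i < size w -> k != i.-1 -> k != i ->
  nth 0 (swap_at i w) k = nth 0 w k.
Proof.
move=> Hi kl kr; case: (ltnP k (size w)) => Hk; first by rewrite nth_swap_at // swap_index_id.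
by rewrite !nth_default ?size_swap_at.
Qed.

Lemma weak_le_refl w : weak_le w w.
Proof. by []. Qed.

Lemma weak_le_trans u v w : weak_le u v -> weak_le v w -> weak_le u w.
Proof. by move=> uv vw p /uv /vw. Qed.

Lemma INV_descent i w : 0 < i < size w -> descent_at i w -> INV w (nth 0 w i, nth 0 w i.-1).
Proof. by move=> Hi D; exists i.-1, i; split => //; apply/andP; split; lia. Qed.

Lemma weak_le_swap_at i w : 0 < i < size w -> descent_at i w -> weak_le (swap_at i w) w.
Proof.
move=> Hi D p [a [b [/andP [ab]]]]; rewrite size_swap_at => b_lt.
rewrite !nth_swap_at //; last lia.
case: (boolP ((a == i.-1) && (b == i))) => [/andP [/eqP -> /eqP ->]|Hab].
  by move: D; rewrite /descent_at swap_index_r swap_index_l; lia.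
move=> lt_ba ->; exists (swap_index i a), (swap_index i b); split => //.
by rewrite swap_index_mono //= ?swap_index_ltn; lia.
Qed.

Lemma INV_swap_at i w p : 0 < i < size w -> INV w p -> p <> (nth 0 w i, nth 0 w i.-1) ->
  INV (swap_at i w) p.
Proof.
move=> Hi [a [b [/andP [ab b_lt] lt_ba ->]]] Hp.
case: (boolP ((a == i.-1) && (b == i))) => [/andP [/eqP Ha /eqP Hb]|Hab]; first by subst a b.
have i_gt0 : 0 < i by lia.
have ab' : swap_index i a < swap_index i b by apply: swap_index_mono.
have b'_lt : swap_index i b < size w by rewrite swap_index_ltn.
exists (swap_index i a), (swap_index i b).
rewrite !nth_swap_at ?swap_indexK ?size_swap_at ?ab' //; lia.
Qed.

Lemma INV_swap_atN i w : 0 < i < size w -> uniq (swap_at i w) ->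
  ~ INV (swap_at i w) (nth 0 w i, nth 0 w i.-1).
Proof.
move=> Hi Uw [a [b [/andP [ab]]]]; rewrite size_swap_at => b_lt _ [Eb Ea].
have /eqP : nth 0 (swap_at i w) a = nth 0 (swap_at i w) i.
  by rewrite -Ea nth_swap_at ?swap_index_r; lia.
have /eqP : nth 0 (swap_at i w) b = nth 0 (swap_at i w) i.-1.
  by rewrite -Eb nth_swap_at ?swap_index_l; lia.
by rewrite !nth_uniq ?size_swap_at //; lia.
Qed.

Lemma weak_le_swap_at_keep i v w : 0 < i < size w -> weak_le v w ->
  ~ INV v (nth 0 w i, nth 0 w i.-1) -> weak_le v (swap_at i w).
Proof. by move=> Hi vw Hv p /[dup] /vw Hw Hp; apply: INV_swap_at => // Ep; rewrite Ep in Hp. Qed.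

Lemma weak_le_swap_atN i v w : 0 < i < size w -> uniq (swap_at i w) ->
  weak_le v (swap_at i w) -> ~ INV v (nth 0 w i, nth 0 w i.-1).
Proof. by move=> Hi Uw vw /vw; apply: INV_swap_atN. Qed.

Lemma INV_split v a b c : uniq v -> a < b < c -> b \in v -> INV v (a, c) ->
  INV v (a, b) \/ INV v (b, c).
Proof.
move=> Uv abc bv [i [j [/andP [ij j_lt] lt_ji [Ea Ec]]]].
have kb : index b v < size v by rewrite index_mem.
have Ek : nth 0 v (index b v) = b := nth_index 0 bv.
case: (ltngtP (index b v) j) => H.
- by left; exists (index b v), j; rewrite Ek Ea; split => //; [apply/andP | lia].
- by right; exists i, (index b v); rewrite Ek Ec; split => //; [apply/andP; split; lia | lia].
- by move: Ek; rewrite H Ea; lia.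
Qed.

Lemma perm_n_props N w : is_perm_n N w ->
  [/\ size w = N, uniq w & forall x, (x \in w) = (0 < x <= N)].
Proof.
move=> Pw; rewrite (perm_size Pw) (perm_uniq Pw) size_iota iota_uniq.
by split => // x; rewrite (perm_mem Pw) mem_iota; lia.
Qed.

Lemma nth_inj_uniq (s : seq nat) a b : uniq s -> a < size s -> b < size s ->
  nth 0 s a = nth 0 s b -> a = b.
Proof. by move=> Us Ha Hb /eqP; rewrite nth_uniq // => /eqP. Qed.

Definition INVb w (p : nat * nat) : bool :=
  [exists a : 'I_(size w), exists b : 'I_(size w),
     [&& a < b, nth 0 w b < nth 0 w a & p == (nth 0 w b, nth 0 w a)]].

Lemma INVP w p : reflect (INV w p) (INVb w p).
Proof.
apply: (iffP existsP) => [[a /existsP [b /and3P [ab lt_ba /eqP ->]]] |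
                          [a [b [/andP [ab b_lt] lt_ba ->]]]].
  by exists a, b; split => //; apply/andP.
have a_lt : a < size w by lia.
by exists (Ordinal a_lt); apply/existsP; exists (Ordinal b_lt); rewrite /= ab lt_ba eqxx.
Qed.

Definition ninv N w := #|[pred q : 'I_N * 'I_N | INVb w (val q.1, val q.2)]|.

Lemma ninv_lt N v w a b : weak_le v w -> INV w (a, b) -> ~ INV v (a, b) ->
  a < N -> b < N -> ninv N v < ninv N w.
Proof.
move=> vw Hw Hv aN bN; apply: proper_card; apply/properP; split.
  by apply/subsetP => q; rewrite !inE => /INVP /vw /INVP.
by exists (Ordinal aN, Ordinal bN); rewrite !inE /=; [exact/INVP | apply/negP => /INVP].
Qed.

(* A permutation strictly below [w] in the weak order misses the inversion of
   some descent of [w]: take the first position [p] where [v] and [w] differ,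
   the position [q] of [v(p)] in [w], and the descent [q] of [w]. *)
Lemma weak_lt_descent N v w : is_perm_n N v -> is_perm_n N w -> weak_le v w -> v <> w ->
  exists i, [/\ 0 < i < N, descent_at i w & ~ INV v (nth 0 w i, nth 0 w i.-1)].
Proof.
move=> Pv Pw vw v_neq_w.
have [Sv Uv Mv] := perm_n_props Pv; have [Sw Uw Mw] := perm_n_props Pw.
have diff : exists k, (k < N) && (nth 0 v k != nth 0 w k).
  case/boolP: [exists k : 'I_N, nth 0 v k != nth 0 w k] => [/existsP [k Hk]|/existsPn H].
    by exists k; rewrite Hk ltn_ord.
  exfalso; apply: v_neq_w; apply: (eq_from_nth (x0 := 0)) => [|k]; rewrite ?Sv ?Sw // => Hk.
  by have := H (Ordinal Hk); rewrite negbK => /eqP.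
case: (ex_minnP diff) => p /andP [pN v_p] p_min.
have vw_eq k : k < p -> nth 0 v k = nth 0 w k.
  by move=> Hk; apply/eqP; have := p_min k; case: eqP => // _; rewrite (ltn_trans Hk) //; lia.
set x := nth 0 v p.
have xw : x \in w by rewrite Mw -Mv mem_nth // Sv.
set q := index x w; have qN : q < N by rewrite -Sw index_mem.
have wq : nth 0 w q = x := nth_index 0 xw.
have pq : p < q.
  case: (ltngtP p q) => // H; last by move: v_p; rewrite -/x H wq eqxx.
  by have := vw_eq q H; rewrite wq => /(nth_inj_uniq Uv); rewrite Sv => /(_ qN pN); lia.
set y := nth 0 w q.-1.
have yv : y \in v by rewrite Mv -Mw mem_nth // Sw; lia.
set k := index y v; have kN : k < N by rewrite -Sv index_mem.
have vk : nth 0 v k = y := nth_index 0 yv.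
have wq_neq k' : k' < N -> nth 0 w q.-1 = nth 0 w k' -> k' = q.-1.
  by move=> k'N /(nth_inj_uniq Uw); rewrite Sw => /(_ _ k'N) ->; lia.
have pk : p < k.
  case: (ltngtP k p) => // H.
    by have := wq_neq k (ltn_trans H pN); rewrite -(vw_eq k H) vk => /(_ erefl); lia.
  by have := wq_neq q qN; rewrite wq /x -H vk => /(_ erefl); lia.
have xy : x < y.
  case: (ltngtP x y) => // H; last by have := wq_neq q qN; rewrite wq H => /(_ erefl); lia.
  have /vw [a [b [/andP [ab b_lt] _ [Eb Ea]]]] : INV v (y, x).
    by exists p, k; rewrite vk; split => //; apply/andP; split; lia.
  rewrite Sw in b_lt.
  have := nth_inj_uniq Uw (a := a) (b := q); rewrite Sw wq => /(_ (ltn_trans ab b_lt) qN (esym Ea)).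
  by have := wq_neq b b_lt Eb; lia.
exists q; split; [lia | by rewrite /descent_at wq |].
move=> [a [b [/andP [ab b_lt] _ [Eb Ea]]]].
rewrite Sv in b_lt; rewrite wq in Eb.
have := nth_inj_uniq Uv (a := a) (b := k); rewrite Sv vk => /(_ (ltn_trans ab b_lt) kN (esym Ea)).
by have := nth_inj_uniq Uv (a := b) (b := p); rewrite Sv => /(_ b_lt pN (esym Eb)); lia.
Qed.

Lemma perm2_sorted (a b x y : nat) : perm_eq [:: a; b] [:: x; y] -> a <= b -> y < x ->
  a = y /\ b = x.
Proof.
move=> P ab yx; have /perm_mem M := P.
have Ua : uniq [:: a; b] by rewrite (perm_uniq P) /= inE; apply/eqP; lia.
have := M a; have := M b; rewrite !inE !eqxx orbT /=.
by move: Ua; rewrite /= inE andbT; do 2 case: eqP => //=; lia.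
Qed.

Definition window i w := [:: nth 0 w i.-1; nth 0 w i; nth 0 w i.+1].

Lemma window_descents i w x y z : window i w = [:: x; y; z] ->
  descent_at i w = (y < x) /\ descent_at i.+1 w = (z < y).
Proof. by case=> <- <- <-. Qed.

Lemma window_swap_at i w x y z : 0 < i -> i < size w -> window i w = [:: x; y; z] ->
  window i (swap_at i w) = [:: y; x; z].
Proof.
move=> i_gt0 Hi [<- <- <-]; rewrite /window (@nth_swap_at_id i w i.+1) //; try lia.
by rewrite !nth_swap_at ?swap_index_l ?swap_index_r //; lia.
Qed.

Lemma window_swap_atS i w x y z : 0 < i -> i.+1 < size w -> window i w = [:: x; y; z] ->
  window i (swap_at i.+1 w) = [:: x; z; y].
Proof.
move=> i_gt0 Hi [<- <- <-]; rewrite /window (@nth_swap_at_id i.+1 w i.-1) //; try lia.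
by rewrite !nth_swap_at ?(swap_index_l (ltn0Sn i)) ?swap_index_r //; lia.
Qed.

End Words.

Section MaximalChains.
Variables (d : Order.disp_t) (T : finTBLatticeType d) (n : nat) (lab : T -> T -> nat).

Local Notation bot := (\bot%O : T).
Local Notation top := (\top%O : T).
Local Notation nt c k := (nth bot (c : seq T) k).

Lemma maxchainP (c : seq T) : size c = n.+1 ->
  maxchain c <-> [/\ nt c 0 = bot, nt c n = top & forall k, k < n -> covers (nt c k) (nt c k.+1)].
Proof.
case: c => [//|x s] /= [Hs]; rewrite /ichain; split.
- case/andP => /eqP -> /andP [/(pathP bot) Hp /eqP Hl]; split => //.
    by rewrite -Hs -(last_nth bot).
  by move=> k; rewrite -Hs; apply: Hp.
- case=> -> Hn Hc; rewrite eqxx (last_nth bot) Hs Hn eqxx andbT /=.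
  by apply/(pathP bot) => k; rewrite Hs; apply: Hc.
Qed.

Lemma nth_labels (c : seq T) k : size c = n.+1 -> k < n ->
  nth 0 (labels lab c) k = lab (nt c k) (nt c k.+1).
Proof. by case: c => [//|x s] /= [Hs] Hk; rewrite (nth_pairmap bot) ?Hs. Qed.

Lemma maxchain_le (c : seq T) i j : size c = n.+1 -> maxchain c -> i <= j <= n ->
  (nt c i <= nt c j)%O.
Proof.
move=> Hs /(maxchainP Hs) [_ _ Hc] /andP [].
elim: j => [|j IH] ij jn; first by have -> : i = 0 by lia.
case: (ltnP i j.+1) => Hi; last by have -> : i = j.+1 by lia.
apply: le_trans (IH _ _) _; try lia.
by have /andP [/ltW] := Hc j jn.
Qed.

Definition subchain (c : seq T) p q := mkseq (fun k => nt c (p + k.+1)) (q - p).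

Lemma ichain_subchain (c : seq T) p q : size c = n.+1 -> maxchain c -> p < q <= n ->
  ichain (nt c p) (nt c q) (subchain c p q).
Proof.
move=> Hs /(maxchainP Hs) [_ _ Hc] Hpq; apply/andP; split.
  apply/(pathP bot) => k; rewrite size_mkseq => Hk.
  rewrite nth_mkseq //; case: k Hk => [|k] Hk /=; first by rewrite addn1; apply: Hc; lia.
  by rewrite nth_mkseq -?addSnnS; [apply: Hc | ]; lia.
rewrite (last_nth bot) size_mkseq.
have -> : q - p = (q - p).-1.+1 by lia.
rewrite /= nth_mkseq; last lia.
by have -> : p + (q - p).-1.+1 = q by lia.
Qed.

Lemma nth_subchain_labels (c : seq T) p q k : size c = n.+1 -> p < q <= n -> k < q - p ->
  nth 0 (ilabels lab (nt c p) (subchain c p q)) k = nth 0 (labels lab c) (p + k).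
Proof.
move=> Hs Hpq Hk; rewrite /ilabels (nth_pairmap bot) ?size_mkseq // nth_labels //; last lia.
rewrite nth_mkseq //; case: k Hk => [|k] Hk /=; first by rewrite addn0 addn1.
by rewrite nth_mkseq; [congr lab; congr nth | ]; lia.
Qed.

Definition labels_sorted_between (c : seq T) p q := forall k, p <= k -> k.+1 < q ->
  nth 0 (labels lab c) k <= nth 0 (labels lab c) k.+1.

Lemma sorted_subchain_labels (c : seq T) p q : size c = n.+1 -> p < q <= n ->
  labels_sorted_between c p q -> sorted leq (ilabels lab (nt c p) (subchain c p q)).
Proof.
move=> Hs Hpq Hsorted; apply/(sortedP 0) => k.
rewrite size_pairmap size_mkseq => Hk.
by rewrite !nth_subchain_labels ?addnS; [apply: Hsorted | ..]; lia.
Qed.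

Lemma labels_sorted_nodescent (c : seq T) i : 0 < i ->
  ~~ descent_at i (labels lab c) -> labels_sorted_between c i.-1 i.+1.
Proof.
move=> i_gt0 D k k_ge k_lt; have -> : k = i.-1 by lia.
by rewrite prednK // leqNgt.
Qed.

Lemma labels_sorted_window (c : seq T) i x y z : 0 < i ->
  window i (labels lab c) = [:: x; y; z] -> x <= y <= z -> labels_sorted_between c i.-1 i.+2.
Proof.
move=> i_gt0 [Ex Ey Ez] xyz k k_ge k_lt.
by case: (eqVneq k i.-1) => [->|ki]; [rewrite prednK // Ex Ey | have -> : k = i by lia]; lia.
Qed.

Lemma descent_at_labels_eq (c1 c2 : seq T) i : size c1 = n.+1 -> size c2 = n.+1 ->
  0 < i < n -> nt c1 i.-1 = nt c2 i.-1 -> nt c1 i = nt c2 i -> nt c1 i.+1 = nt c2 i.+1 ->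
  descent_at i (labels lab c1) = descent_at i (labels lab c2).
Proof.
move=> S1 S2 Hi E1 E2 E3; rewrite /descent_at !nth_labels ?prednK //; try lia.
by rewrite E1 E2 E3.
Qed.

Hypothesis Hgr : graded_rank T n.
Hypothesis HEL : Sn_EL_labeling n lab.

Lemma labels_perm (c : seq T) : maxchain c -> is_perm_n n (labels lab c).
Proof. exact: HEL.2. Qed.

(* Both segments are the unique increasing chain of [x_p, x_q]. *)
Lemma eq_increasing_chains (c1 c2 : seq T) p q : size c1 = n.+1 -> size c2 = n.+1 ->
  maxchain c1 -> maxchain c2 -> p < q <= n -> nt c1 p = nt c2 p -> nt c1 q = nt c2 q ->
  labels_sorted_between c1 p q -> labels_sorted_between c2 p q ->
  forall k, p <= k <= q -> nt c1 k = nt c2 k.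
Proof.
move=> S1 S2 M1 M2 Hpq Ep Eq I1 I2 k Hk.
have Hle : (nt c1 p <= nt c1 q)%O by apply: maxchain_le => //; lia.
have [s [_ _ s_uniq _]] := HEL.1 _ _ Hle.
have E1 := s_uniq _ (ichain_subchain S1 M1 Hpq) (sorted_subchain_labels S1 Hpq I1).
have E2 : subchain c2 p q = s.
  by apply: s_uniq; rewrite ?Ep ?Eq; [exact: ichain_subchain | exact: sorted_subchain_labels].
case: (posnP (k - p)) => Hkp; first by have -> : k = p by lia.
have := congr1 (fun s => nth bot s (k - p).-1) (etrans E1 (esym E2)).
rewrite /= !nth_mkseq; try lia.
by have -> : p + (k - p).-1.+1 = k by lia.
Qed.

(* Gradedness: replacing the segment of a maximal chain between ranks p and q by
   any chain of that interval gives a maximal chain, hence of length n. *)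
Lemma size_ichain_between (c : seq T) p q s : size c = n.+1 -> maxchain c -> p < q <= n ->
  ichain (nt c p) (nt c q) s -> size s = q - p.
Proof.
case: c => [//|x tl] [Hs] /= /andP [/eqP -> /andP [Hp /eqP Hl]] Hpq /andP [Hsp /eqP Hsl].
have last_take k : k <= size tl -> last bot (take k tl) = nth bot (bot :: tl) k.
  by case: k => [|k] Hk //=; rewrite (last_nth bot) size_takel //= nth_take.
have := Hp; rewrite -{1}(cat_take_drop p tl) cat_path => /andP [Hp1 _].
move: Hp; rewrite -(cat_take_drop q tl) cat_path last_take; last lia; case/andP=> _ Hp2.
move: Hl; rewrite -(cat_take_drop q tl) last_cat last_take; last lia; move=> Hl.
have := Hgr (s := take p tl ++ s ++ drop q tl).
rewrite /ichain cat_path Hp1 last_take; last lia.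
rewrite cat_path Hsp Hsl Hp2 !last_cat last_take; last lia.
rewrite Hsl Hl eqxx /= => /(_ isT).
by rewrite !size_cat size_take size_drop; case: ltnP; lia.
Qed.

End MaximalChains.

Section RaisingOperators.
Variables (d : Order.disp_t) (T : finTBLatticeType d) (n : nat) (lab : T -> T -> nat).
Hypothesis Hgr : graded_rank T n.
Hypothesis HEL : Sn_EL_labeling n lab.

Local Notation bot := (\bot%O : T).
Local Notation nt c k := (nth bot (c : seq T) k).
Local Notation chain := ((n.+1).-tuple T).
Local Notation U := (U lab).

Definition is_U i (c c' : chain) : bool :=
  [&& maxchain c', [forall j : 'I_n.+1, (val j != i) ==> (tnth c' j == tnth c j)]
    & ~~ descent_at i (labels lab c')].

Lemma agree_offP i (c c' : chain) :
  reflect (forall k, k != i -> nt c' k = nt c k)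
          [forall j : 'I_n.+1, (val j != i) ==> (tnth c' j == tnth c j)].
Proof.
apply: (iffP forallP) => [H k ki | H j]; last by apply/implyP => ji; rewrite !(tnth_nth bot) H.
case: (ltnP k n.+1) => Hk; last by rewrite !nth_default ?size_tuple.
by have := H (Ordinal Hk); rewrite /= ki !(tnth_nth bot) => /eqP.
Qed.

Lemma chain_eq (c1 c2 : chain) : (forall k, nt c1 k = nt c2 k) -> c1 = c2.
Proof. by move=> E; apply/val_inj/(eq_from_nth (x0 := bot)) => [|k _]; rewrite ?size_tuple. Qed.

(* The increasing chain of the rank-2 interval [x_(i-1), x_(i+1)] replaces x_i. *)
Lemma is_U_exists (c : chain) i : maxchain c -> 0 < i < n -> exists c', is_U i c c'.
Proof.
move=> Mc Hi; have Sc := size_tuple c.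
have [c0 cn Hcov] := (maxchainP Sc).1 Mc.
have Hle : (nt c i.-1 <= nt c i.+1)%O by apply: (maxchain_le (n := n)); rewrite ?size_tuple //; lia.
have [s [Hs Hsort _ _]] := HEL.1 _ _ Hle.
have Hsz : size s = 2 by rewrite (size_ichain_between Hgr Sc Mc _ Hs); lia.
case: s Hs Hsort Hsz => [|y [|z [|]]] //=.
move=> /andP [/andP [Hxy /andP [Hyz _]] /eqP Hz] /andP [Hlab _] _.
rewrite /= in Hz; subst z; pose f k := if k == i then y else nt c k.
have Sf : size (mkseq f n.+1) == n.+1 by rewrite size_mkseq.
have Ef k : k < n.+1 -> nt (Tuple Sf) k = f k by move=> Hk; rewrite /= nth_mkseq.
exists (Tuple Sf); apply/and3P; split.
- apply/(maxchainP (size_tuple _)); rewrite !Ef // /f.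
  split; [by rewrite ifN_eq //; lia | by rewrite ifN_eq //; lia | move=> k Hk].
  rewrite !Ef /f; try lia.
  case: (eqVneq k i) => [->|ki]; first by rewrite ifN_eq //; lia.
  case: (eqVneq k.+1 i) => [Ei|_] /=; last exact: Hcov.
  by rewrite -Ei /= in Hxy.
- apply/agree_offP => k ki; case: (ltnP k n.+1) => Hk; first by rewrite Ef // /f ifN.
  by rewrite !nth_default ?size_tuple ?size_mkseq.
- rewrite /descent_at !(nth_labels (n := n)) ?size_tuple -?leqNgt ?prednK ?Ef; try lia.
  by rewrite /f eqxx !ifN_eq //; lia.
Qed.

Lemma is_U_uniq (c c1 c2 : chain) i : 0 < i < n -> is_U i c c1 -> is_U i c c2 -> c1 = c2.
Proof.
move=> Hi /and3P [M1 /agree_offP A1 D1] /and3P [M2 /agree_offP A2 D2].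
apply: chain_eq => k; case: (eqVneq k i) => [->|ki]; last by rewrite A1 // A2.
have ne_i j : j != i -> nt c1 j = nt c2 j by move=> ji; rewrite A1 // A2.
apply: (eq_increasing_chains HEL (size_tuple _) (size_tuple _) M1 M2 (p := i.-1) (q := i.+1));
  [lia | rewrite ne_i //; apply/eqP; lia | rewrite ne_i //; apply/eqP; lia
  | apply: labels_sorted_nodescent D1; lia | apply: labels_sorted_nodescent D2; lia | lia].
Qed.

Lemma U_spec (c : chain) i : maxchain c -> 0 < i < n -> is_U i c (U i c).
Proof.
move=> Mc Hi; rewrite /Defs.U; case: pickP => [//|none] /=.
by have [c' Hc'] := is_U_exists Mc Hi; move: (none c'); rewrite /is_U in Hc' *; rewrite Hc'.
Qed.

Lemma U_unique (c c' : chain) i : maxchain c -> 0 < i < n -> is_U i c c' -> U i c = c'.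
Proof. by move=> Mc Hi; apply: is_U_uniq Hi (U_spec Mc Hi). Qed.

Lemma U_nodescent (c : chain) i : maxchain c -> 0 < i < n -> ~~ descent_at i (labels lab c) ->
  U i c = c.
Proof. by move=> Mc Hi D; apply: U_unique => //; rewrite /is_U Mc D andbT; apply/agree_offP. Qed.

Lemma maxchain_U (c : chain) i : maxchain c -> 0 < i < n -> maxchain (U i c).
Proof. by move=> Mc Hi; case/and3P: (U_spec Mc Hi). Qed.

Lemma nth_U (c : chain) i k : maxchain c -> 0 < i < n -> k != i -> nt (U i c) k = nt c k.
Proof. by move=> Mc Hi; case/and3P: (U_spec Mc Hi) => _ /agree_offP H _; apply: H. Qed.

Lemma U_nondescent (c : chain) i : maxchain c -> 0 < i < n -> ~~ descent_at i (labels lab (U i c)).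
Proof. by move=> Mc Hi; case/and3P: (U_spec Mc Hi). Qed.

(* Both label sequences are permutations that agree outside positions i-1, i,
   so these two positions carry the same pair of values, now in increasing order. *)
Lemma labels_U (c : chain) i : maxchain c -> 0 < i < n -> descent_at i (labels lab c) ->
  labels lab (U i c) = swap_at i (labels lab c).
Proof.
move=> Mc Hi D; have Mc' := maxchain_U Mc Hi.
have [S1 _ _] := perm_n_props (labels_perm HEL Mc).
have [S2 _ _] := perm_n_props (labels_perm HEL Mc').
set w := labels lab c in D S1 *; set w' := labels lab (U i c) in S2 *.
have Eo k : k < n -> k != i.-1 -> k != i -> nth 0 w' k = nth 0 w k.
  by move=> Hk kl kr; rewrite !(nth_labels (n := n)) ?size_tuple // !nth_U //; apply/eqP; lia.
have Pw : perm_eq w' w.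
  by apply: perm_trans (labels_perm HEL Mc') _; rewrite perm_sym; apply: labels_perm.
have split2 u : size u = n ->
    u = take i.-1 u ++ [:: nth 0 u i.-1; nth 0 u i] ++ drop i.+1 u.
  move=> Su; rewrite -{1}(cat_take_drop i.-1 u) (drop_nth 0) ?Su; last lia.
  by rewrite prednK; [rewrite (drop_nth 0) ?Su // | ]; lia.
have Ht : take i.-1 w' = take i.-1 w.
  apply: (eq_from_nth (x0 := 0)) => [|k]; rewrite ?size_take ?S1 ?S2 //.
  by rewrite ifT; [move=> Hk; rewrite !nth_take // Eo; try apply/eqP | ]; lia.
have Hd : drop i.+1 w' = drop i.+1 w.
  apply: (eq_from_nth (x0 := 0)) => [|k]; rewrite ?size_drop ?S1 ?S2 // => Hk.
  by rewrite !nth_drop Eo //; try apply/eqP; lia.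
move: Pw; rewrite {1}(split2 w' S2) {1}(split2 w S1) Ht Hd perm_cat2l perm_cat2r => P2.
have := U_nondescent Mc Hi; rewrite -/w' /descent_at -leqNgt => ND.
have [E1 E2] := perm2_sorted P2 ND D.
apply: (eq_from_nth (x0 := 0)) => [|k]; rewrite ?size_swap_at ?S1 ?S2 // => Hk.
rewrite nth_swap_at ?S1 //; case: (eqVneq k i.-1) => [->|kl]; first by rewrite swap_index_l; lia.
case: (eqVneq k i) => [->|kr]; first by rewrite swap_index_r.
by rewrite swap_index_id // Eo.
Qed.

Lemma window_U (c : chain) i x y z : maxchain c -> 0 < i < n ->
  window i (labels lab c) = [:: x; y; z] -> y < x -> window i (labels lab (U i c)) = [:: y; x; z].
Proof.
move=> Mc Hi W yx; have [D _] := window_descents W.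
have [S _ _] := perm_n_props (labels_perm HEL Mc).
by rewrite labels_U ?D // (window_swap_at _ _ W) ?S //; lia.
Qed.

Lemma window_US (c : chain) i x y z : maxchain c -> 0 < i -> i.+1 < n ->
  window i (labels lab c) = [:: x; y; z] -> z < y ->
  window i (labels lab (U i.+1 c)) = [:: x; z; y].
Proof.
move=> Mc i_gt0 Hi W zy; have [_ D] := window_descents W; have Hi1 : 0 < i.+1 < n by [].
have [S _ _] := perm_n_props (labels_perm HEL Mc).
by rewrite labels_U ?D // (window_swap_atS _ _ W) ?S //; lia.
Qed.

Lemma nth_U_eq (c1 c2 : chain) j : maxchain c1 -> maxchain c2 -> 0 < j < n ->
  nt c1 j.-1 = nt c2 j.-1 -> nt c1 j.+1 = nt c2 j.+1 -> nt (U j c1) j = nt (U j c2) j.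
Proof.
move=> M1 M2 Hj E1 E2.
have Ep : nt (U j c1) j.-1 = nt (U j c2) j.-1 by rewrite !nth_U //; apply/eqP; lia.
have Eq : nt (U j c1) j.+1 = nt (U j c2) j.+1 by rewrite !nth_U //; apply/eqP; lia.
apply: (eq_increasing_chains HEL (size_tuple _) (size_tuple _) (maxchain_U M1 Hj)
  (maxchain_U M2 Hj) (p := j.-1) (q := j.+1) _ Ep Eq);
  [lia
  | apply: labels_sorted_nodescent (U_nondescent M1 Hj); lia
  | apply: labels_sorted_nodescent (U_nondescent M2 Hj); lia | lia].
Qed.

Lemma U_comm (c : chain) i j : maxchain c -> 0 < i < n -> 0 < j < n -> i.+2 <= j ->
  U j (U i c) = U i (U j c).
Proof.
move=> Mc Hi Hj ij; have Mi := maxchain_U Mc Hi; have Mj := maxchain_U Mc Hj.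
symmetry; apply: U_unique => //; rewrite /is_U maxchain_U //=; apply/andP; split.
  apply/agree_offP => k ki; case: (eqVneq k j) => [->|kj]; last by rewrite !nth_U.
  by apply: nth_U_eq => //; rewrite nth_U //; apply/eqP; lia.
rewrite (descent_at_labels_eq (n := n) _ _ (c2 := U i c)) ?size_tuple ?U_nondescent //;
  by rewrite nth_U //; apply/eqP; lia.
Qed.

(* Both sides reverse the three labels at positions i-1, i, i+1 and fix the rest
   of the chain, so they are the increasing chain of the same rank-3 interval. *)
Lemma U_braid (c : chain) i : maxchain c -> 0 < i -> i.+1 < n ->
  descent_at i (labels lab c) -> descent_at i.+1 (labels lab c) ->
  U i (U i.+1 (U i c)) = U i.+1 (U i (U i.+1 c)).
Proof.
move=> Mc i_gt0 Hin ba cb; have Hi : 0 < i < n by lia.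
have Hi1 : 0 < i.+1 < n by lia.
have W0 : window i (labels lab c) = [:: _; _; _] := erefl.
have ca := ltn_trans cb ba.
have M1 := maxchain_U Mc Hi; have M2 := maxchain_U M1 Hi1; have M3 := maxchain_U M2 Hi.
have N1 := maxchain_U Mc Hi1; have N2 := maxchain_U N1 Hi; have N3 := maxchain_U N2 Hi1.
have W3 := window_U M2 Hi (window_US M1 i_gt0 Hin (window_U Mc Hi W0 ba) ca) cb.
have V3 := window_US N2 i_gt0 Hin (window_U N1 Hi (window_US Mc i_gt0 Hin W0 cb) ca) ba.
have off k : k != i -> k != i.+1 ->
    nt (U i (U i.+1 (U i c))) k = nt (U i.+1 (U i (U i.+1 c))) k.
  by move=> ki ki1; rewrite !nth_U.
apply: chain_eq => k; case: (boolP ((k == i) || (k == i.+1))) => Hk; last first.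
  by apply: off; apply: contra Hk => ->; rewrite ?orbT.
apply: (eq_increasing_chains HEL (size_tuple _) (size_tuple _) M3 N3 (p := i.-1) (q := i.+2)).
- lia.
- by apply: off; apply/eqP; lia.
- by apply: off; apply/eqP; lia.
- by apply: labels_sorted_window W3 _; [ | apply/andP; split; apply: ltnW].
- by apply: labels_sorted_window V3 _; [ | apply/andP; split; apply: ltnW].
- by case/orP: Hk => /eqP ->; lia.
Qed.

Inductive reach (c : chain) : chain -> Prop :=
| reach_refl : reach c c
| reach_U i e : 0 < i < n -> reach (U i c) e -> reach c e.

Lemma reach_trans (a b c : chain) : reach a b -> reach b c -> reach a c.
Proof. by elim=> // {}a i e Hi _ IH /IH; apply: reach_U. Qed.

Lemma reach_step (c : chain) i : 0 < i < n -> reach c (U i c).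
Proof. by move=> Hi; apply: (reach_U Hi); apply: reach_refl. Qed.

Lemma maxchain_reach (c e : chain) : maxchain c -> reach c e -> maxchain e.
Proof. by move=> Mc R; elim: R Mc => // {}c i {}e Hi _ IH Mc; apply/IH/maxchain_U. Qed.

Lemma inM_reach (m c : chain) : inM lab m c <-> reach m c.
Proof.
split=> [[s [Hs ->]] | ].
  elim: s Hs => [_|i s IH /andP [Hi /IH R]] /=; first exact: reach_refl.
  exact: reach_trans R (reach_step _ Hi).
elim=> [|c' i e Hi _ [s [Hs ->]]]; first by exists [::].
by exists (rcons s i); rewrite all_rcons Hi Hs foldr_rcons.
Qed.

Lemma weak_le_labels_U (c : chain) i : maxchain c -> 0 < i < n ->
  weak_le (labels lab (U i c)) (labels lab c).
Proof.
move=> Mc Hi; case: (boolP (descent_at i (labels lab c))) => D; last by rewrite U_nodescent.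
have [S _ _] := perm_n_props (labels_perm HEL Mc).
by rewrite labels_U //; apply: (weak_le_swap_at _ D); rewrite S.
Qed.

Lemma weak_le_labels_U_keep (c : chain) i v : maxchain c -> 0 < i < n ->
  descent_at i (labels lab c) -> weak_le v (labels lab c) ->
  ~ INV v (nth 0 (labels lab c) i, nth 0 (labels lab c) i.-1) -> weak_le v (labels lab (U i c)).
Proof.
move=> Mc Hi D vc Nv; have [S _ _] := perm_n_props (labels_perm HEL Mc).
by rewrite labels_U //; apply: (weak_le_swap_at_keep _ vc Nv); rewrite S.
Qed.

Lemma weak_le_labels_reach (c e : chain) : maxchain c -> reach c e ->
  weak_le (labels lab e) (labels lab c).
Proof.
move=> Mc R; elim: R Mc => [{}c|{}c i {}e Hi _ IH] Mc; first exact: weak_le_refl.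
exact: weak_le_trans (IH (maxchain_U Mc Hi)) (weak_le_labels_U Mc Hi).
Qed.

Lemma ninv_labels_U (c : chain) i : maxchain c -> 0 < i < n -> descent_at i (labels lab c) ->
  ninv n.+1 (labels lab (U i c)) < ninv n.+1 (labels lab c).
Proof.
move=> Mc Hi D; have [S _ M] := perm_n_props (labels_perm HEL Mc).
have [_ U' _] := perm_n_props (labels_perm HEL (maxchain_U Mc Hi)).
have lt_n k : k < n -> nth 0 (labels lab c) k < n.+1.
  by move=> Hk; have := M (nth 0 (labels lab c) k); rewrite mem_nth ?S //; lia.
apply: (ninv_lt (weak_le_labels_U Mc Hi) (INV_descent _ D)); rewrite ?S ?lt_n //; try lia.
by rewrite labels_U //; apply: INV_swap_atN; rewrite ?S // -labels_U.
Qed.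

Lemma reach_ninv (c e : chain) : maxchain c -> reach c e ->
  e = c \/ ninv n.+1 (labels lab e) < ninv n.+1 (labels lab c).
Proof.
move=> Mc R; elim: R Mc => [{}c|{}c i {}e Hi _ IH] Mc; first by left.
case: (boolP (descent_at i (labels lab c))) => D; last by move: IH; rewrite U_nodescent //; apply.
right; case: (IH (maxchain_U Mc Hi)) => [->|lt_e]; first exact: ninv_labels_U.
exact: ltn_trans lt_e (ninv_labels_U Mc Hi D).
Qed.

Lemma reach_descent (c e : chain) : maxchain c -> reach c e ->
  e = c \/ exists2 i, 0 < i < n & descent_at i (labels lab c) /\ reach (U i c) e.
Proof.
move=> Mc R; elim: R Mc => [{}c|{}c i {}e Hi R IH] Mc; first by left.
case: (boolP (descent_at i (labels lab c))) => D; first by right; exists i.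
by move: IH; rewrite U_nodescent //; apply.
Qed.

(* Step at a descent whose inversion is not one of v; this removes exactly
   one inversion, so the inversion number decreases. *)
Lemma reach_weak_le (c : chain) v : maxchain c -> is_perm_n n v ->
  weak_le v (labels lab c) -> exists2 e, reach c e & labels lab e = v.
Proof.
move=> Mc Pv; move Hk: (ninv n.+1 (labels lab c)) => k.
elim/ltn_ind: k c Hk Mc => k IH c Hk Mc vc.
case: (eqVneq (labels lab c) v) => [<-|ne]; first by exists c => //; apply: reach_refl.
have [S _ _] := perm_n_props (labels_perm HEL Mc).
have [i [Hi D Nv]] := weak_lt_descent Pv (labels_perm HEL Mc) vc (nesym (elimN eqP ne)).
have [||e R <-] := IH _ _ (U i c) erefl (maxchain_U Mc Hi).
- by rewrite -Hk; apply: ninv_labels_U.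
- exact: weak_le_labels_U_keep.
- by exists e => //; apply: reach_U R.
Qed.

Lemma labels_U_notINV (c : chain) i v : maxchain c -> 0 < i < n ->
  descent_at i (labels lab c) -> weak_le v (labels lab (U i c)) ->
  ~ INV v (nth 0 (labels lab c) i, nth 0 (labels lab c) i.-1).
Proof.
move=> Mc Hi D; have [S _ _] := perm_n_props (labels_perm HEL Mc).
have [_ Uw _] := perm_n_props (labels_perm HEL (maxchain_U Mc Hi)).
by rewrite labels_U // in Uw *; apply: weak_le_swap_atN; rewrite ?S.
Qed.

(* Local confluence of the U_i below a permutation v: a common lower bound is
   reached by the commutation relation when |i - j| > 1 and by the braid
   relation when j = i + 1. *)
Lemma reach_diamond (c : chain) i j v : maxchain c -> 0 < i < n -> 0 < j < n -> i < j ->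
  descent_at i (labels lab c) -> descent_at j (labels lab c) -> is_perm_n n v ->
  weak_le v (labels lab (U i c)) -> weak_le v (labels lab (U j c)) ->
  exists e, [/\ reach (U i c) e, reach (U j c) e & weak_le v (labels lab e)].
Proof.
move=> Mc Hi Hj ij Di Dj Pv vi vj.
have [S _ Mw] := perm_n_props (labels_perm HEL Mc); have [_ Uv Mv] := perm_n_props Pv.
have Ni := labels_U_notINV Mc Hi Di vi; have Nj := labels_U_notINV Mc Hj Dj vj.
have Mi := maxchain_U Mc Hi.
case: (ltngtP j i.+1) => Hj1; first lia.
  exists (U j (U i c)); split; [exact: reach_step | by rewrite U_comm //; exact: reach_step |].
  have far k : k \in [:: j; j.-1] -> nth 0 (labels lab (U i c)) k = nth 0 (labels lab c) k.
    by rewrite !inE labels_U // => /orP [] /eqP ->; rewrite nth_swap_at_id ?S //; apply/eqP; lia.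
  apply: (weak_le_labels_U_keep Mi Hj _ vi); rewrite /descent_at !far ?mem_head //;
    by rewrite !inE eqxx orbT.
subst j; have i_gt0 : 0 < i by lia.
have Hin : i.+1 < n by lia.
have ca := ltn_trans Dj Di.
have W1 := window_U Mc Hi (erefl : window i (labels lab c) = [:: _; _; _]) Di.
have M2 := maxchain_U Mi Hj; have [_ D1] := window_descents W1.
have W2 := window_US Mi i_gt0 Hin W1 ca.
have [D2 _] := window_descents W2.
exists (U i (U i.+1 (U i c))); split.
- by apply: (reach_U Hj); apply: reach_step.
- by rewrite U_braid //; apply: (reach_U Hi); apply: reach_step.
case: W1 D1 => _ E1 E2 D1; case: W2 D2 => E3 E4 _ D2.
apply: (weak_le_labels_U_keep M2 Hi); rewrite ?D2 ?E3 ?E4 //.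
apply: (weak_le_labels_U_keep Mi Hj); rewrite ?D1 ?E1 ?E2 //.
(* an inversion (w_(i+1), w_(i-1)) of v would split at w_i into an excluded one *)
move=> /(INV_split Uv (b := nth 0 (labels lab c) i)) [].
- exact/andP.
- by rewrite Mv -Mw mem_nth ?S; lia.
- exact: Nj.
- exact: Ni.
Qed.

Lemma reach_labels_inj (c e1 e2 : chain) : maxchain c -> reach c e1 -> reach c e2 ->
  labels lab e1 = labels lab e2 -> e1 = e2.
Proof.
move Hk: (ninv n.+1 (labels lab c)) => k.
elim/ltn_ind: k c e1 e2 Hk => k IH c e1 e2 Hk Mc R1 R2 E.
case: (reach_descent Mc R1) => [E1 | [i Hi [Di R1']]].
  by subst e1; case: (reach_ninv Mc R2) => [->|] //; rewrite -E ltnn.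
case: (reach_descent Mc R2) => [E2 | [j Hj [Dj R2']]].
  by subst e2; case: (reach_ninv Mc R1) => [->|] //; rewrite E ltnn.
have IHU l : 0 < l < n -> descent_at l (labels lab c) -> forall f1 f2,
    reach (U l c) f1 -> reach (U l c) f2 -> labels lab f1 = labels lab f2 -> f1 = f2.
  move=> Hl Dl f1 f2; apply: (IH _ _ (U l c) f1 f2 erefl (maxchain_U Mc Hl)).
  by rewrite -Hk ninv_labels_U.
case: (eqVneq i j) => [Eij|ij]; first by subst j; exact: IHU R1' R2' E.
have Vi := weak_le_labels_reach (maxchain_U Mc Hi) R1'.
have Vj : weak_le (labels lab e1) (labels lab (U j c)).
  by rewrite E; apply: weak_le_labels_reach (maxchain_U Mc Hj) R2'.
have P1 := labels_perm HEL (maxchain_reach Mc R1).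
have [f [Fi Fj Fv]] : exists f,
    [/\ reach (U i c) f, reach (U j c) f & weak_le (labels lab e1) (labels lab f)].
  case: (ltngtP i j) => [lt_ij|lt_ji|Eij]; [exact: reach_diamond | | by rewrite Eij eqxx in ij].
  by have [f [? ? ?]] := reach_diamond Mc Hj Hi lt_ji Dj Di P1 Vj Vi; exists f.
have [g Rg Eg] := reach_weak_le (maxchain_reach (maxchain_U Mc Hi) Fi) P1 Fv.
have -> := IHU i Hi Di _ _ R1' (reach_trans Fi Rg) (esym Eg).
by apply: IHU Hj Dj _ _ (reach_trans Fj Rg) R2' _; rewrite Eg E.
Qed.

End RaisingOperators.

Theorem mainTheorem6 (d : Order.disp_t) (T : finTBLatticeType d) (n : nat)
  (lab : T -> T -> nat)
  (Hgr : graded_rank T n)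
  (HEL : Sn_EL_labeling n lab)
  (m : (n.+1).-tuple T) (Hm : maxchain m) :
  (forall m1 m2, inM lab m m1 -> inM lab m m2 ->
     labels lab m1 = labels lab m2 -> m1 = m2) /\
  (forall w : seq nat,
     (is_perm_n n w /\ weak_le w (labels lab m)) <->
     (exists m', inM lab m m' /\ labels lab m' = w)) /\
  (forall w : seq nat, is_perm_n n w -> weak_le w (labels lab m) ->
     exists! m', inM lab m m' /\ labels lab m' = w).
Proof.
have inj m1 m2 : inM lab m m1 -> inM lab m m2 -> labels lab m1 = labels lab m2 -> m1 = m2.
  by move=> /inM_reach R1 /inM_reach R2; exact: (reach_labels_inj Hgr HEL Hm R1 R2).
have ex w : is_perm_n n w -> weak_le w (labels lab m) ->
    exists2 m', inM lab m m' & labels lab m' = w.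
  move=> Pw wm; have [e R <-] := reach_weak_le Hgr HEL Hm Pw wm.
  by exists e => //; apply/inM_reach.
split=> //; split=> w.
  split=> [[Pw /(ex w Pw) [m' ? ?]] | [m' [/inM_reach R <-]]]; first by exists m'.
  split; first exact: (labels_perm HEL (maxchain_reach Hgr HEL Hm R)).
  exact: (weak_le_labels_reach Hgr HEL Hm R).
move=> Pw /(ex w Pw) [m' Hm' Em']; exists m'; split=> // m'' [Hm'' Em''].
by apply: inj; rewrite // Em' Em''.
Qed.
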